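(* Under the standing assumptions in the context, with $h^E$, $h^S$ defined as there, for all $r\in[r_0,r_1]$, $$0\le h^S(r)-h^E(r)\le \frac{g}{u_0^2-g h_0}\,\big(h^E(r)\big)^2\,\big(1-\nu(r)\big).$$ In particular there is a constant $c>0$ (namely $c=g/(u_0^2-gh_0)$) with $h^S(r)-h^E(r)\le c\,(h^E(r))^2(1-\nu(r))$ for all $r\in[r_0,r_1]$.
   Context: Standing assumptions and notation. Let $g>0$, $0<r_0<r_1$, and let $f\in C^1([r_0,r_1])$ with $f'(r)\le 0$ for all $r\in[r_0,r_1]$, $f'(r_0)=0$, and $f(r_0)>f(r_1)$. Set $\nu(r)=1/\sqrt{1+(f'(r))^2}$. Let $h_0>0$, $u_0>0$ with $u_0^2/(g h_0)>1$. Define $q_e=\tfrac12 u_0^2+g\,(f(r_0)+h_0)$, $q_w=r_0h_0u_0$, $\eta(r)=q_e-g f(r)$, and $$\mathcal P^S_r(h)=g h^3-\eta(r)h^2+\frac{q_w^2}{2r^2},\qquad \mathcal P^E_r(h)=g\,\nu(r)\, h^3-\eta(r)h^2+\frac{q_w^2}{2r^2}.$$ Let $\nu^S(r)=1$, $\nu^E(r)=\nu(r)$, $h^M_\star(r)=\dfrac{2\eta(r)}{3g\,\nu^M(r)}$ for $M\in\{E,S\}$. For each $r\in[r_0,r_1]$ and $M\in\{E,S\}$, $h^M(r)$ denotes the unique root of $\mathcal P^M_r$ in the interval $(0,h^M_\star(r))$ (this root exists and $h^M$ is continuous with $h^M(r_0)=h_0$). *)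

From Stdlib Require Import Reals.
From Coquelicot Require Import Coquelicot.
Open Scope R_scope.

Definition nu (df : R -> R) (r : R) : R := 1 / sqrt (1 + (df r)^2).

Definition qe (g u0 h0 f0 : R) : R := 1/2 * u0^2 + g * (f0 + h0).
Definition qw (r0 h0 u0 : R) : R := r0 * h0 * u0.
Definition eta (g u0 h0 r0 : R) (f : R -> R) (r : R) : R :=
  qe g u0 h0 (f r0) - g * f r.

(* P^M_r(h) = g nuM h^3 - eta(r) h^2 + q_w^2/(2 r^2); nuM = 1 (S) or nu(r) (E) *)
Definition Ppoly (g u0 h0 r0 : R) (f : R -> R) (nuM : R) (r h : R) : R :=
  g * nuM * h^3 - eta g u0 h0 r0 f r * h^2 + (qw r0 h0 u0)^2 / (2 * r^2).

Definition hstar (g u0 h0 r0 : R) (f : R -> R) (nuM : R) (r : R) : R :=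
  2 * eta g u0 h0 r0 f r / (3 * g * nuM).

Definition is_root_branch (g u0 h0 r0 r1 : R) (f : R -> R) (nuM : R -> R)
  (hM : R -> R) : Prop :=
  forall r, r0 <= r <= r1 ->
    0 < hM r < hstar g u0 h0 r0 f (nuM r) r /\
    Ppoly g u0 h0 r0 f (nuM r) r (hM r) = 0.

From Stdlib Require Import Reals.
From Coquelicot Require Import Coquelicot.
From Stdlib Require Import Lra Psatz.
Open Scope R_scope.

(* Both heights are subcritical roots of the cubic [k h^3 - eta h^2 + Q], with
   [k = g] for [h^S] and [k = g nu <= g] for [h^E].  Below [h_star] the cubic is
   decreasing, so lowering [k] lowers the root: [h^E <= h^S <= h0].  Subtracting
   the two equations gives [(h^S - h^E) D = g (1 - nu) (h^E)^3] with
   [D = eta (h^S + h^E) - g ((h^S)^2 + h^S h^E + (h^E)^2)], and since [f] is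
   nonincreasing, [eta >= u0^2/2 + g h0] and [Q <= h0^2 u0^2 / 2], which together
   with [h^E <= h^S <= h0] give [D >= h^E (u0^2 - g h0)]. *)

Definition cubic (k eta Q h : R) : R := k * h^3 - eta * h^2 + Q.

Lemma cubic_sub (k eta Q x y : R) :
  cubic k eta Q y - cubic k eta Q x
  = (y - x) * (k * (x^2 + x * y + y^2) - eta * (x + y)).
Proof. unfold cubic; ring. Qed.

Lemma cubic_decreasing (k eta Q x y : R) :
  0 < k -> 0 < x -> x < y -> 3 * k * y < 2 * eta ->
  cubic k eta Q y < cubic k eta Q x.
Proof.
  intros Hk Hx Hxy Hy.
  assert (Hsq : 2 * (x^2 + x * y + y^2) < 3 * y * (x + y)) by nra.
  assert (Hquad : k * (x^2 + x * y + y^2) < eta * (x + y)).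
  { assert (2 * (k * (x^2 + x * y + y^2)) < 3 * k * y * (x + y)) by nra.
    assert (3 * k * y * (x + y) < 2 * eta * (x + y)) by nra.
    lra. }
  pose proof (cubic_sub k eta Q x y). nra.
Qed.

Lemma cubic_root_le (k eta Q x y : R) :
  0 < k -> 0 < x -> 3 * k * y < 2 * eta ->
  cubic k eta Q x <= 0 -> cubic k eta Q y = 0 -> y <= x.
Proof.
  intros Hk Hx Hy Hpx Hpy.
  destruct (Rle_lt_dec y x) as [Hle | Hlt]; [exact Hle |].
  pose proof (cubic_decreasing k eta Q x y Hk Hx Hlt Hy). lra.
Qed.

Section RootComparison.

Variables (g eta Q a h0 nu s e : R).
Hypotheses (Hg : 0 < g) (Hh0 : 0 < h0) (Ha : g * h0 < a) (Hnu : 0 < nu <= 1)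
  (Heta : a / 2 + g * h0 <= eta) (HQ : Q <= h0^2 * a / 2)
  (Hs : 0 < s) (Hs_sub : 3 * g * s < 2 * eta) (Hs_root : cubic g eta Q s = 0)
  (He : 0 < e) (He_sub : 3 * (g * nu) * e < 2 * eta)
  (He_root : cubic (g * nu) eta Q e = 0).

Lemma root_le_h0 : s <= h0.
Proof.
  apply (cubic_root_le g eta Q); auto.
  unfold cubic. nra.
Qed.

Lemma perturbed_root_le : e <= s.
Proof.
  apply (cubic_root_le (g * nu) eta Q); [nra | exact Hs | exact He_sub | | exact He_root].
  assert (Hgap : cubic (g * nu) eta Q s = cubic g eta Q s - g * (1 - nu) * s^3)
    by (unfold cubic; ring).
  rewrite Hgap, Hs_root.
  assert (0 <= g * (1 - nu) * s^3).
  { apply Rmult_le_pos; [apply Rmult_le_pos | apply pow_le]; lra. }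
  lra.
Qed.

Lemma root_gap_bounds : 0 <= s - e /\ s - e <= g / (a - g * h0) * e^2 * (1 - nu).
Proof.
  pose proof root_le_h0 as Hsh0. pose proof perturbed_root_le as Hes.
  split; [lra |].
  set (D := eta * (s + e) - g * (s^2 + s * e + e^2)).
  assert (HD : (s - e) * D = g * (1 - nu) * e^3).
  { transitivity (cubic (g * nu) eta Q e - cubic g eta Q s + g * (1 - nu) * e^3).
    - unfold D, cubic. ring.
    - rewrite Hs_root, He_root. ring. }
  assert (HDlow : e * (a - g * h0) <= D).
  { assert (eta * (s + e) >= (a / 2 + g * h0) * (s + e)) by nra.
    assert (s^2 + s * e + e^2 <= h0 * s + 2 * h0 * e) by nra.
    assert (g * (s^2 + s * e + e^2) <= g * (h0 * s + 2 * h0 * e))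
      by (apply Rmult_le_compat_l; lra).
    assert (0 <= a / 2 * (s - e)) by (apply Rmult_le_pos; nra).
    unfold D. nra. }
  replace (g / (a - g * h0) * e^2 * (1 - nu))
    with (g * (1 - nu) * e^3 / (e * (a - g * h0))) by (field; lra).
  apply Rmult_le_reg_r with (e * (a - g * h0)); [nra |].
  unfold Rdiv. rewrite Rmult_assoc, Rinv_l by nra. nra.
Qed.

End RootComparison.

Lemma nu_pos_le1 (df : R -> R) (r : R) : 0 < nu df r <= 1.
Proof.
  unfold nu.
  assert (Hsq : 1 <= sqrt (1 + df r ^ 2)).
  { rewrite <- sqrt_1 at 1. apply sqrt_le_1_alt. pose proof (pow2_ge_0 (df r)). lra. }
  split.
  - apply Rdiv_lt_0_compat; lra.
  - apply (Rmult_le_reg_r (sqrt (1 + df r ^ 2))); [lra |].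
    unfold Rdiv. rewrite Rmult_assoc, Rinv_l; lra.
Qed.

Lemma nonpos_derive_le_left (f df : R -> R) (a b r : R) :
  (forall x, a <= x <= b -> is_derive f x (df x)) ->
  (forall x, a <= x <= b -> df x <= 0) ->
  a <= r <= b -> f r <= f a.
Proof.
  intros Hder Hdf Hr.
  destruct (Req_dec r a) as [-> | Hne]; [lra |].
  destruct (MVT_gen f a r df) as [c [Hc Hmvt]]; unfold Rmin, Rmax in *.
  - intros x Hx. apply Hder. destruct (Rle_dec a r); lra.
  - intros x Hx. apply continuity_pt_filterlim.
    apply (ex_derive_continuous (K := R_AbsRing) (V := R_NormedModule)).
    eexists. apply Hder. destruct (Rle_dec a r); lra.
  - destruct (Rle_dec a r); [| lra].
    assert (df c <= 0) by (apply Hdf; lra). nra.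
Qed.

Lemma qw_term_le (r0 h0 u0 r : R) :
  0 < r0 -> r0 <= r -> (qw r0 h0 u0)^2 / (2 * r^2) <= h0^2 * u0^2 / 2.
Proof.
  intros Hr0 Hr. unfold qw.
  apply (Rmult_le_reg_r (2 * r^2)); [nra |].
  unfold Rdiv. rewrite Rmult_assoc, Rinv_l by nra.
  assert (r0^2 <= r^2) by nra.
  assert (0 <= h0^2 * u0^2) by (apply Rmult_le_pos; apply pow2_ge_0).
  nra.
Qed.

Lemma root_branch_cubic (g u0 h0 r0 r1 : R) (f nuM hM : R -> R) (r : R) :
  0 < g -> 0 < nuM r -> is_root_branch g u0 h0 r0 r1 f nuM hM -> r0 <= r <= r1 ->
  0 < hM r /\ 3 * (g * nuM r) * hM r < 2 * eta g u0 h0 r0 f r /\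
  cubic (g * nuM r) (eta g u0 h0 r0 f r) ((qw r0 h0 u0)^2 / (2 * r^2)) (hM r) = 0.
Proof.
  intros Hg Hnu HM Hr.
  destruct (HM r Hr) as [[Hpos Hlt] Hroot]. unfold hstar in Hlt.
  split; [exact Hpos | split; [| exact Hroot]].
  apply (Rmult_lt_compat_l (3 * (g * nuM r))) in Hlt; [| nra].
  replace (3 * (g * nuM r) * (2 * eta g u0 h0 r0 f r / (3 * g * nuM r)))
    with (2 * eta g u0 h0 r0 f r) in Hlt by (field; lra).
  exact Hlt.
Qed.

Theorem proposition1
  (g r0 r1 h0 u0 : R) (f df hE hS : R -> R)
  (Hg : 0 < g) (Hr0 : 0 < r0) (Hr01 : r0 < r1)
  (* f is C^1 on [r0,r1] with derivative df *)
  (Hder : forall r, r0 <= r <= r1 -> is_derive f r (df r))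
  (Hcont : forall r, r0 <= r <= r1 -> continuous df r)
  (Hdfle : forall r, r0 <= r <= r1 -> df r <= 0)
  (Hdf0 : df r0 = 0)
  (Hf : f r0 > f r1)
  (Hh0 : 0 < h0) (Hu0 : 0 < u0) (Hsup : u0^2 / (g * h0) > 1)
  (HS : is_root_branch g u0 h0 r0 r1 f (fun _ => 1) hS)
  (HE : is_root_branch g u0 h0 r0 r1 f (nu df) hE) :
  (forall r, r0 <= r <= r1 ->
     0 <= hS r - hE r /\
     hS r - hE r <= g / (u0^2 - g * h0) * (hE r)^2 * (1 - nu df r)) /\
  (exists c, 0 < c /\ c = g / (u0^2 - g * h0) /\
     forall r, r0 <= r <= r1 ->
       hS r - hE r <= c * (hE r)^2 * (1 - nu df r)).
Proof.
  assert (Hsuper : g * h0 < u0^2).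
  { apply (Rmult_lt_compat_l (g * h0)) in Hsup; [| nra].
    rewrite Rmult_1_r in Hsup.
    replace (g * h0 * (u0^2 / (g * h0))) with (u0^2) in Hsup by (field; nra).
    exact Hsup. }
  assert (Hmain : forall r, r0 <= r <= r1 ->
     0 <= hS r - hE r /\
     hS r - hE r <= g / (u0^2 - g * h0) * (hE r)^2 * (1 - nu df r)).
  { intros r Hr.
    pose proof (nu_pos_le1 df r) as Hnu.
    destruct (root_branch_cubic g u0 h0 r0 r1 f (fun _ => 1) hS r Hg Rlt_0_1 HS Hr)
      as [HSpos [HSsub HSroot]].
    destruct (root_branch_cubic g u0 h0 r0 r1 f (nu df) hE r Hg (proj1 Hnu) HE Hr)
      as [HEpos [HEsub HEroot]].
    rewrite Rmult_1_r in HSsub, HSroot.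
    pose proof (nonpos_derive_le_left f df r0 r1 r Hder Hdfle Hr).
    apply (root_gap_bounds g (eta g u0 h0 r0 f r) ((qw r0 h0 u0)^2 / (2 * r^2)) (u0^2) h0);
      auto.
    - unfold eta, qe. nra.
    - apply qw_term_le; lra. }
  split; [exact Hmain |].
  exists (g / (u0^2 - g * h0)). split; [apply Rdiv_lt_0_compat; lra |].
  split; [reflexivity |]. intros r Hr. apply Hmain, Hr.
Qed.
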